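(* Let $(\Omega,\mathcal{F},\mathbb{P})$ be a complete probability space, $c$ a random cost vector in a compact convex $\mathcal{C}\subseteq\mathbb{R}^d$ with $\mathbb{E}[\|c\|^2]<\infty$ and absolutely continuous law, $\mathcal{Z}\subseteq\mathbb{R}^d$ non-empty compact (full-row-rank constraint matrix if polyhedral), and $\pi^*:\mathcal{C}\to\mathcal{Z}$ measurable, $L$-Lipschitz, with $\mathbb{E}[\|\pi^*(c)\|^2]<\infty$ and $\pi^*(c)\in\arg\min_{z\in\mathcal{Z}}c^\top z$ a.s. Let $\hat{\mathbb{E}}[c]$ be an estimator of $\mathbb{E}[c]$ based on an i.i.d. sample of size $n$ satisfying $\hat{\mathbb{E}}[c]\to\mathbb{E}[c]$ in probability, $\|\hat{\mathbb{E}}[c]-\mathbb{E}[c]\|=\mathcal{O}_P(n^{-1/2})$, and $\sqrt n(\hat{\mathbb{E}}[c]-\mathbb{E}[c])\to\mathcal{N}(0,\Sigma_c)$ in distribution. Then $$\mathrm{Regret}(c,\pi^*(\hat{\mathbb{E}}[c]))=\mathrm{Cov}(c,\pi^*(c))+R(c)+\mathcal{O}_P(n^{-1/2}).$$ If in addition $R(c)=0$, this becomes $\mathrm{Cov}(c,\pi^*(c))+\mathcal{O}_P(n^{-1/2})$.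
   Context: $\mathrm{Regret}(c,\pi^*(\hat{\mathbb{E}}[c]))=\mathbb{E}[c^\top\pi^*(c)]-\mathbb{E}[c^\top\pi^*(\hat{\mathbb{E}}[c])]$; $\mathrm{Cov}(c,\pi^*(c))=\mathbb{E}[c^\top\pi^*(c)]-\mathbb{E}[c]^\top\mathbb{E}[\pi^*(c)]$; $R(c)=\mathbb{E}[c]^\top(\mathbb{E}[\pi^*(c)]-\pi^*(\mathbb{E}[c]))$; $\Sigma_c$ is the covariance matrix of $c$. *)

From HB Require Import structures.
From mathcomp Require Import all_boot all_order all_algebra.
From mathcomp Require Import all_classical all_reals all_analysis.
Set Implicit Arguments. Unset Strict Implicit. Unset Printing Implicit Defensive.
Import Order.TTheory GRing.Theory Num.Theory.
Import numFieldNormedType.Exports.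
Local Open Scope classical_set_scope.
Local Open Scope ring_scope.

Section defs.
Context {R : realType} {d : nat}.
Local Notation vec := 'rV[R]_d.

Definition dotv (u v : vec) : R := \sum_(i < d) u 0 i * v 0 i.
Definition enorm (u : vec) : R := Num.sqrt (dotv u u).

Definition borel_vec : set (set vec) := <<s [set: vec], open >>.

Definition rvec_measurable {dT} {T : measurableType dT} (X : T -> vec) :=
  forall A, borel_vec A -> measurable (X @^-1` A).

Definition box (a b : vec) : set vec :=
  [set x | forall i : 'I_d, a 0 i <= x 0 i <= b 0 i].
Definition box_vol (a b : vec) : R := \prod_(i < d) Num.max 0 (b 0 i - a 0 i).
Definition lebesgue_null (A : set vec) :=
  forall eps : R, 0 < eps -> exists a b : nat -> vec,
    A `<=` \bigcup_k box (a k) (b k) /\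
    (\sum_(0 <= k <oo) (box_vol (a k) (b k))%:E <= eps%:E)%E.

Definition abs_cont_law {dT} {T : measurableType dT} (P : probability T R)
  (X : T -> vec) :=
  forall A, borel_vec A -> lebesgue_null A -> P (X @^-1` A) = 0%E.

Definition convex_set_vec (C : set vec) :=
  forall x y t, C x -> C y -> 0 <= t <= 1 -> C (t *: x + (1 - t) *: y).

Definition mean_vec {dT} {T : measurableType dT} (P : probability T R)
  (X : T -> vec) : vec := \row_i fine ('E_P[fun w => X w 0 i]).

Definition cov_mx {dT} {T : measurableType dT} (P : probability T R)
  (X : T -> vec) : 'M[R]_d :=
  \matrix_(i, j) fine ('E_P[fun w => (X w 0 i - mean_vec P X 0 i) *
                                     (X w 0 j - mean_vec P X 0 j)]).

Definition mutually_independent {dT} {T : measurableType dT}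
  (Q : probability T R) (X : nat -> T -> vec) :=
  forall (I : seq nat) (A : nat -> set vec), uniq I ->
    (forall k, borel_vec (A k)) ->
    Q (\bigcap_(k in [set k | k \in I]) (X k @^-1` A k)) =
    (\prod_(k <- I) Q (X k @^-1` A k))%E.

Definition same_law {dT} {T : measurableType dT} {dU} {U : measurableType dU}
  (Q : probability T R) (X : T -> vec) (P : probability U R) (Y : U -> vec) :=
  forall A, borel_vec A -> Q (X @^-1` A) = P (Y @^-1` A).

Definition cvg_in_prob {dT} {T : measurableType dT} (Q : probability T R)
  (Y : nat -> T -> vec) (m : vec) :=
  forall eps : R, 0 < eps ->
    (fun n => Q [set q | eps < enorm (Y n q - m)]) @ \oo --> 0%E.

Definition bounded_in_prob {dT} {T : measurableType dT} (Q : probability T R)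
  (Y : nat -> T -> R) (r : nat -> R) :=
  forall eps : R, 0 < eps -> exists M : R, 0 < M /\ exists N : nat,
    forall n, (N <= n)%N -> (Q [set q | (M * r n < `|Y n q|)%R] <= eps%:E)%E.

(* the centred Gaussian law N(0,S) on R^d, characterised by its
   characteristic function t |-> exp(- t^T S t / 2) *)
Definition is_gaussian0 {dT} {T : measurableType dT} (PZ : probability T R)
  (Z : T -> vec) (S : 'M[R]_d) :=
  rvec_measurable Z /\
  forall t : vec,
    ('E_PZ[fun w => cos (dotv t (Z w))] = (expR (- (dotv t (t *m S)) / 2))%:E)%E /\
    ('E_PZ[fun w => sin (dotv t (Z w))] = 0)%E.

Definition cvg_dist_gaussian0 {dT} {T : measurableType dT}
  (Q : probability T R) (Y : nat -> T -> vec) (S : 'M[R]_d) :=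
  exists (dZ : measure_display) (TZ : measurableType dZ)
         (PZ : probability TZ R) (Z : TZ -> vec),
    is_gaussian0 PZ Z S /\
    forall g : vec -> R, continuous g -> (exists B : R, forall x, `|g x| <= B) ->
      ((fun n => 'E_Q[fun q => g (Y n q)]) @ \oo --> 'E_PZ[fun w => g (Z w)])%E.

Definition std_polyhedron (m : nat) (A : 'M[R]_(m, d)) (b : 'cV[R]_m) : set vec :=
  [set z | A *m z^T = b /\ forall i, 0 <= z 0 i].

(* Regret of the decision pi(zhat), for a fixed plug-in estimate zhat,
   the expectation being over (a fresh draw of) the cost c:
   E[c^T pi(c)] - E[c^T pi(zhat)] *)
Definition regret {dT} {T : measurableType dT} (P : probability T R)
  (c : T -> vec) (pi : vec -> vec) (zhat : vec) : R :=
  fine ('E_P[fun w => dotv (c w) (pi (c w))]) -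
  fine ('E_P[fun w => dotv (c w) (pi zhat)]).

Definition cov_cpi {dT} {T : measurableType dT} (P : probability T R)
  (c : T -> vec) (pi : vec -> vec) : R :=
  fine ('E_P[fun w => dotv (c w) (pi (c w))]) -
  dotv (mean_vec P c) (mean_vec P (pi \o c)).

Definition Rterm {dT} {T : measurableType dT} (P : probability T R)
  (c : T -> vec) (pi : vec -> vec) : R :=
  dotv (mean_vec P c) (mean_vec P (pi \o c) - pi (mean_vec P c)).

Definition sample_estimator {T : Type} (est : forall n : nat, ('I_n -> vec) -> vec)
  (X : nat -> T -> vec) (n : nat) (q : T) : vec :=
  est n (fun i : 'I_n => X (nat_of_ord i) q).

End defs.

From HB Require Import structures.
From mathcomp Require Import all_boot all_order all_algebra.
From mathcomp Require Import all_classical all_reals all_analysis.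
From mathcomp Require Import measurable_realfun.
From mathcomp Require Import lra.
Import Order.TTheory GRing.Theory Num.Theory.
Import numFieldNormedType.Exports.
Local Open Scope classical_set_scope.
Local Open Scope ring_scope.

(* Since the plug-in estimate z is a fixed vector, E[c^T pi(z)] = E[c]^T pi(z),
   and the regret decomposes exactly:
     Regret(z) - Cov(c, pi(c)) - R(c) = E[c]^T (pi(E[c]) - pi(z)).
   As C is closed and the estimate converges to E[c] in probability, E[c] lies
   in C, so the Lipschitz bound gives
     |E[c]^T (pi(E[c]) - pi(z))| <= |E[c]|_1 L |z - E[c]|,
   which is O_P(n^(-1/2)) by the assumed rate of the estimator. *)

Section euclidean.
Context {R : realType} {d : nat}.
Local Notation vec := 'rV[R]_d.
Implicit Types u v w : vec.

Lemma dotvBr u v w : dotv u (v - w) = dotv u v - dotv u w.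
Proof. by rewrite /dotv -sumrB; apply: eq_bigr => i _; rewrite !mxE mulrBr. Qed.

Lemma dotvv_ge0 v : 0 <= dotv v v.
Proof. by rewrite /dotv sumr_ge0 // => i _; rewrite -expr2 sqr_ge0. Qed.

Lemma enorm_ge0 v : 0 <= enorm v.
Proof. exact: sqrtr_ge0. Qed.

Lemma enormN v : enorm (- v) = enorm v.
Proof.
by rewrite /enorm /dotv; congr Num.sqrt; apply: eq_bigr => i _; rewrite !mxE mulrNN.
Qed.

Lemma coord_le_enorm v i : `|v 0 i| <= enorm v.
Proof.
rewrite /enorm -sqrtr_sqr ler_sqrt ?dotvv_ge0 // /dotv (bigD1 i) //= expr2.
by rewrite lerDl sumr_ge0 // => j _; rewrite -expr2 sqr_ge0.
Qed.

Lemma dotv_le_l1_enorm u v : `|dotv u v| <= (\sum_i `|u 0 i|) * enorm v.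
Proof.
rewrite /dotv mulr_suml; apply: (le_trans (ler_norm_sum _ _ _)).
by apply: ler_sum => i _; rewrite normrM ler_wpM2l // coord_le_enorm.
Qed.

Lemma dotv_lipschitz_le (C : set vec) (pi : vec -> vec) L u m z :
  (forall x y, C x -> C y -> enorm (pi x - pi y) <= L * enorm (x - y)) -> C m -> C z ->
  `|dotv u (pi m - pi z)| <= (\sum_i `|u 0 i|) * `|L| * enorm (z - m).
Proof.
move=> pi_lip Cm Cz; apply: le_trans (dotv_le_l1_enorm _ _) _.
rewrite -mulrA ler_wpM2l ?sumr_ge0 // -enormN opprB.
by apply: le_trans (pi_lip z m Cz Cm) _; rewrite ler_wpM2r ?enorm_ge0 ?ler_norm.
Qed.

(* The topology of ['rV_d] is that of the sup norm, whose balls contain the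
   Euclidean ones. *)
Lemma enorm_lt_ball (m v : vec) e : enorm (v - m) < e -> ball m e v.
Proof.
move=> lt_ve; have e_gt0 : 0 < e := le_lt_trans (enorm_ge0 _) lt_ve.
split => // i j; rewrite (ord1 i) /ball /= distrC.
by apply: le_lt_trans lt_ve; have := coord_le_enorm (v - m) j; rewrite !mxE.
Qed.

Lemma dotv_continuous {T : topologicalType} {f g : T -> vec} :
  continuous f -> continuous g -> continuous (fun x => dotv (f x) (g x)).
Proof.
move=> fc gc; apply: (@continuous_big R^o _ _ _ _ add_continuous) => i _ x.
have coordc (h : T -> vec) : continuous h -> continuous (fun y => h y 0 i).
  by move=> hc y; exact: (continuous_comp (hc y) (@coord_continuous R 1 d 0 i _)).
exact: continuousM (coordc f fc x) (coordc g gc x).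
Qed.

Lemma enorm_continuous : continuous (@enorm R d).
Proof.
move=> v; have dotc := @dotv_continuous vec id id (fun v => cvg_id) (fun v => cvg_id) v.
exact: (continuous_comp dotc (@sqrt_continuous R _)).
Qed.

Lemma enormB_continuous (m : vec) : continuous (fun v => enorm (v - m)).
Proof.
move=> v; have subc : {for v, continuous (fun w : vec => w - m)}.
  by apply: continuousB => //; exact: cst_continuous.
exact: (continuous_comp subc (enorm_continuous _)).
Qed.

Lemma dotv_subr_continuous (u w : vec) : continuous (fun v => dotv u (w - v)).
Proof.
have subc : continuous (fun v : vec => w - v).
  by move=> v; apply: continuousB => //; exact: cst_continuous.
exact: dotv_continuous (@cst_continuous _ _ u) subc.
Qed.

End euclidean.

Section random_vector.
Context {R : realType} {d : nat} {dT : measure_display} {T : measurableType dT}.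
Local Notation vec := 'rV[R]_d.
Variable Y : T -> vec.
Hypothesis Y_meas : rvec_measurable Y.

Lemma rvec_measurable_open (A : set vec) : open A -> measurable (Y @^-1` A).
Proof. by move=> oA; apply: Y_meas; apply: sub_sigma_algebra. Qed.

Lemma rvec_measurable_superlevel (h : vec -> R) a :
  continuous h -> measurable [set q | a < h (Y q)].
Proof.
move=> hc; change (measurable (Y @^-1` (h @^-1` [set x | a < x]))).
apply: rvec_measurable_open.
by apply: open_comp; [move=> x _; exact: hc | exact: open_gt].
Qed.

Lemma rvec_measurable_coord i : measurable_fun setT (fun q => Y q 0 i).
Proof.
apply: (@measurability _ _ _ _ setT _ (@RGenOInfty.G R)).
  exact: RGenOInfty.measurableE.
move=> _ [_ [x ->] <-].
rewrite setTI (_ : _ @^-1` _ = [set q | x < Y q 0 i]).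
  exact: (@rvec_measurable_superlevel (fun v => v 0 i) x (@coord_continuous R 1 d 0 i)).
by apply/funext => q /=; rewrite in_itv /= andbT.
Qed.

Lemma rvec_measurable_superlevel_comp (C : set vec) (pi : vec -> vec) (h : vec -> R) a :
  (forall A, borel_vec A -> borel_vec (C `&` pi @^-1` A)) -> (forall q, C (Y q)) ->
  continuous h -> measurable [set q | a < h (pi (Y q))].
Proof.
move=> pi_meas YC hc.
rewrite (_ : [set q | _] = Y @^-1` (C `&` pi @^-1` (h @^-1` [set x | a < x]))).
  apply: Y_meas; apply: pi_meas; apply: sub_sigma_algebra.
  by apply: open_comp; [move=> x _; exact: hc | exact: open_gt].
by apply/seteqP; split => q /= => [|[]//]; split.
Qed.

Section bounded.
Variables (P : probability T R) (C : set vec).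
Hypotheses (C_compact : compact C) (YC : forall q, C (Y q)).

Lemma rvec_coord_Lfun i : (fun q => Y q 0 i) \in Lfun P 1.
Proof.
apply/Lfun1_integrable/measurable_bounded_integrable => //.
- exact: le_lt_trans (probability_le1 P measurableT) (ltry 1).
- exact: rvec_measurable_coord.
have coord_cont : {within C, continuous (fun v : vec => v 0 i)}.
  by apply: continuous_subspaceT => x; exact: coord_continuous.
have := @compact_bounded R R^o _ (@continuous_compact _ R^o _ C coord_cont C_compact).
rewrite /bounded_near => /= bnd.
by apply: (filterS _ bnd) => M HM q _; apply: HM; exists (Y q).
Qed.

Lemma expectation_dotv (z : vec) :
  ('E_P[fun q => dotv (Y q) z] = (dotv (mean_vec P Y) z)%:E)%E.
Proof.
pose F i := z 0 i \o* (fun q => Y q 0 i).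
have FL i : F i \in Lfun P 1 by apply: Lfun_scale => //; exact: rvec_coord_Lfun.
rewrite (_ : (fun q => _) = \sum_(Fi <- map F (index_enum 'I_d)) Fi).
  rewrite expectation_sum; last by move=> _ /mapP [i _ ->]; exact: FL.
  rewrite big_map /dotv -sumEFin; apply: eq_bigr => i _.
  rewrite expectationZl ?rvec_coord_Lfun // mxE EFinM fineK 1?muleC //.
  exact/expectation_fin_num/rvec_coord_Lfun.
rewrite big_map fct_sumE; apply/funext => q.
by apply: eq_bigr => i _; rewrite /F /= mulrC.
Qed.

End bounded.
End random_vector.

Section in_probability.
Context {R : realType} {dT : measure_display} {T : measurableType dT}.
Variable Q : probability T R.

Lemma cvg_in_prob_closed {d : nat} (C : set 'rV[R]_d) (Y : nat -> T -> 'rV[R]_d) m :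
  closed C -> (forall n q, C (Y n q)) -> cvg_in_prob Q Y m -> C m.
Proof.
move=> C_closed YC Ycvg; apply: contrapT => Cm.
have /nbhs_ballP [e e_gt0 ballC] : nbhs m (~` C).
  by apply: open_nbhs_nbhs; split => //; exact: closed_openC.
have e2_gt0 : 0 < e / 2 by rewrite divr_gt0.
suff far n : [set q | e / 2 < enorm (Y n q - m)] = setT.
  have := Ycvg _ e2_gt0; under eq_fun do rewrite far probability_setT.
  by move/(cvg_unique (@ereal_hausdorff R) (cvg_cst 1%E)) => /eqP; rewrite onee_eq0.
apply/seteqP; split => // q _ /=; rewrite ltNge; apply/negP => near_m.
apply: (ballC (Y n q)) (YC n q); apply: enorm_lt_ball.
by apply: le_lt_trans near_m _; rewrite ltr_pdivrMr // ltr_pMr // ltr1n.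
Qed.

Lemma bounded_in_prob_le (X Y : nat -> T -> R) (r : nat -> R) (A : R) :
  0 <= A ->
  (forall n a, measurable [set q | a < `|X n q|]) ->
  (forall n a, measurable [set q | a < `|Y n q|]) ->
  (forall n q, `|Y n q| <= A * `|X n q|) ->
  bounded_in_prob Q X r -> bounded_in_prob Q Y r.
Proof.
move=> A_ge0 X_meas Y_meas YX Xbnd eps eps_gt0.
have [M [M_gt0 [N XN]]] := Xbnd eps eps_gt0.
have A1_gt0 : 0 < A + 1 by rewrite ltr_wpDl.
exists ((A + 1) * M); split; first exact: mulr_gt0.
exists N => n le_Nn; apply: le_trans (XN n le_Nn).
apply: le_measure; rewrite ?inE //= => q /= YMr.
rewrite -(ltr_pM2l A1_gt0) mulrA; apply: lt_le_trans YMr _.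
by apply: le_trans (YX n q) _; rewrite ler_wpM2r // lerDl.
Qed.

End in_probability.

Section regret.
Context {R : realType} {d : nat} {dT : measure_display} {T : measurableType dT}.
Local Notation vec := 'rV[R]_d.
Variables (P : probability T R) (c : T -> vec) (C : set vec) (pi : vec -> vec).
Hypotheses (c_meas : rvec_measurable c) (C_compact : compact C).
Hypothesis c_in_C : forall w, C (c w).

(* E[c^T pi(c)] and E[pi(c)] enter only through [fine] and cancel, so no
   integrability of [pi \o c] is needed. *)
Lemma regret_sub_cov_Rterm z :
  regret P c pi z - cov_cpi P c pi - Rterm P c pi =
  dotv (mean_vec P c) (pi (mean_vec P c) - pi z).
Proof.
rewrite /regret /cov_cpi /Rterm (expectation_dotv _ c_meas P _ C_compact c_in_C) /=.
rewrite !dotvBr; lra.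
Qed.

End regret.

Theorem theorem3p10 (R : realType) (d : nat)
  (* complete probability space (Omega, F, P) carrying the cost c *)
  (dO : measure_display) (Omega : measurableType dO) (P : probability Omega R)
  (P_complete : measure_is_complete P)
  (* cost vector c with values in a compact convex C *)
  (C : set 'rV[R]_d) (C_compact : compact C) (C_convex : convex_set_vec C)
  (c : Omega -> 'rV[R]_d) (c_meas : rvec_measurable c) (c_in_C : forall w, C (c w))
  (c_L2 : P.-integrable setT (fun w => ((enorm (c w)) ^+ 2)%:E))
  (c_ac : abs_cont_law P c)
  (* feasible set Z *)
  (Z : set 'rV[R]_d) (Z_nonempty : Z !=set0) (Z_compact : compact Z)
  (Z_poly : (exists m (A : 'M[R]_(m, d)) b, Z = std_polyhedron A b) ->
            exists m (A : 'M[R]_(m, d)) b, row_free A /\ Z = std_polyhedron A b)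
  (* the optimal policy pi* : C -> Z *)
  (pi : 'rV[R]_d -> 'rV[R]_d) (L : R)
  (pi_into : forall x, C x -> Z (pi x))
  (pi_meas : forall A, borel_vec A -> borel_vec (C `&` pi @^-1` A))
  (pi_lip : forall x y, C x -> C y -> enorm (pi x - pi y) <= L * enorm (x - y))
  (pi_L2 : P.-integrable setT (fun w => ((enorm (pi (c w))) ^+ 2)%:E))
  (pi_opt : {ae P, forall w, forall z, Z z -> dotv (c w) (pi (c w)) <= dotv (c w) z})
  (* i.i.d. sample X_1, X_2, ... distributed as c, on a sample space Q *)
  (dQ : measure_display) (Qs : measurableType dQ) (Q : probability Qs R)
  (X : nat -> Qs -> 'rV[R]_d)
  (X_meas : forall k, rvec_measurable (X k))
  (X_law : forall k, same_law Q (X k) P c)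
  (X_indep : mutually_independent Q X)
  (* the estimator of E[c] built from the sample of size n *)
  (est : forall n : nat, ('I_n -> 'rV[R]_d) -> 'rV[R]_d)
  (Ehat_in_C : forall n q, C (sample_estimator est X n q))
  (Ehat_meas : forall n, rvec_measurable ((sample_estimator est X) n))
  (Ehat_cons : cvg_in_prob Q (sample_estimator est X) (mean_vec P c))
  (Ehat_rate : bounded_in_prob Q (fun n q => enorm ((sample_estimator est X) n q - mean_vec P c))
                       (fun n => (Num.sqrt (n%:R))^-1))
  (Ehat_clt : cvg_dist_gaussian0 Q
                (fun n q => Num.sqrt (n%:R) *: ((sample_estimator est X) n q - mean_vec P c))
                (cov_mx P c)) :
  bounded_in_prob Q (fun n q => regret P c pi ((sample_estimator est X) n q) - cov_cpi P c pi - Rterm P c pi)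
          (fun n => (Num.sqrt (n%:R))^-1) /\
  (Rterm P c pi = 0 ->
   bounded_in_prob Q (fun n q => regret P c pi ((sample_estimator est X) n q) - cov_cpi P c pi)
           (fun n => (Num.sqrt (n%:R))^-1)).
Proof.
set zh := sample_estimator est X; set m := mean_vec P c.
have Cm : C m.
  have C_closed := compact_closed (@norm_hausdorff _ _) C_compact.
  exact: cvg_in_prob_closed C_closed Ehat_in_C Ehat_cons.
have excess n q := regret_sub_cov_Rterm P _ _ pi c_meas C_compact c_in_C (zh n q).
have main : bounded_in_prob Q
    (fun n q => regret P c pi (zh n q) - cov_cpi P c pi - Rterm P c pi)
    (fun n => (Num.sqrt n%:R)^-1).
  apply: (bounded_in_prob_le Q _ _ _ ((\sum_i `|m 0 i|) * `|L|) _ _ _ _ Ehat_rate).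
  - by rewrite mulr_ge0 ?sumr_ge0.
  - move=> n a.
    apply: (rvec_measurable_superlevel _ (Ehat_meas n) (fun v => `|enorm (v - m)|)) => v.
    exact: (cvg_norm (enormB_continuous m v)).
  - move=> n a; under eq_set do rewrite excess.
    apply: (rvec_measurable_superlevel_comp _ (Ehat_meas n) _ _
      (fun v => `|dotv m (pi m - v)|) a pi_meas (Ehat_in_C n)) => v.
    exact: (cvg_norm (dotv_subr_continuous m (pi m) v)).
  - move=> n q; rewrite excess [`|enorm _|]ger0_norm ?enorm_ge0 //.
    exact: dotv_lipschitz_le pi_lip Cm (Ehat_in_C n q).
split=> // R0; rewrite R0 in main.
by under eq_fun do under eq_fun do rewrite -[_ - _]subr0.
Qed.
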